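(* Let $x,y$ be Boolean strings with $|y|\ge1$, and let $w=xy0$. Then $\mu_x(y0)\le 0$ if $\rho(xy)>\mu_x(y)=0$, and $\mu_x(y0)\le\mu_x(y)-1$ otherwise.
   Context: Characteristic strings and forks. A characteristic string is $w=w_1\dots w_n\in\{0,1\}^n$; index $i$ is honest if $w_i=0$ and adversarial if $w_i=1$. A fork for $w$ is a rooted tree with edges directed away from the root $r$ and labeling $\ell:V\to\{0,\dots,n\}$ with (F1) $\ell(r)=0$; (F2) labels strictly increasing along directed paths; (F3) each honest index labels exactly one vertex; (F4) for honest $i<j$ the vertex labeled $i$ has strictly smaller depth than the vertex labeled $j$. Write $F\vdash w$. A vertex is honest if it is the root or labeled by an honest index. A tine is a directed path from the root; its length is its number of edges, $\ell(t)$ the label of its last vertex. A fork is closed if every leaf is honest; a closed fork has a unique longest tine $\hat t$. For closed $F\vdash w$ and tine $t$: $\mathrm{gap}(t)=\mathrm{length}(\hat t)-\mathrm{length}(t)$, $\mathrm{reserve}(t)=|\{i:w_i=1,\ i>\ell(t)\}|$, $\mathrm{reach}(t)=\mathrm{reserve}(t)-\mathrm{gap}(t)$; $\rho(F)=\max_t\mathrm{reach}(t)$, $\rho(w)=\max\{\rho(F):F\vdash w\text{ closed}\}$. For $w=xy$, tines are disjoint over $y$ if they share no edge terminating at a vertex with label $>|x|$ (a tine may be paired with itself). $\mu_x(F)=\max\min\{\mathrm{reach}(t_1),\mathrm{reach}(t_2)\}$ over pairs disjoint over $y$, and $\mu_x(y)=\max\{\mu_x(F):F\vdash xy\text{ closed}\}$.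 *)

From Stdlib Require Import ClassicalEpsilon.
From mathcomp Require Import all_boot all_order all_algebra.
Set Implicit Arguments. Unset Strict Implicit. Unset Printing Implicit Defensive.
Import Order.TTheory GRing.Theory Num.Theory.

(* Characteristic strings: w : seq bool, w_i = nth false w i.-1 for 1 <= i <= size w;
   true encodes 1 (adversarial), false encodes 0 (honest). *)
Definition adv (w : seq bool) (i : nat) : bool := nth false w i.-1.
Definition honest_idx (w : seq bool) (i : nat) : bool := ~~ adv w i.

(* The greatest element of a set of integers (chosen classically);
   meaningful when the set has a greatest element. *)
Definition maxZ (P : int -> Prop) : int :=
  epsilon (inhabits 0%R) (fun m => P m /\ forall k, P k -> (k <= m)%R).

(* A (labelled rooted) tree: vertices are 0 .. fsize, vertex 0 is the root,
   fpar v is the parent of vertex v > 0 (numbered so that fpar v < v, a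
   topological numbering which exists for every finite rooted tree),
   and flab is the labelling. *)
Record fork := Fork { fsize : nat; fpar : nat -> nat; flab : nat -> nat }.

Definition vertex (F : fork) (v : nat) : bool := v <= fsize F.

Fixpoint depth_aux (par : nat -> nat) (fuel v : nat) : nat :=
  match fuel with
  | 0 => 0
  | f.+1 => if v == 0 then 0 else (depth_aux par f (par v)).+1
  end.
Definition depth (F : fork) (v : nat) : nat := depth_aux (fpar F) v v.

Fixpoint on_path_aux (par : nat -> nat) (fuel v u : nat) : bool :=
  (v == u) ||
  match fuel with
  | 0 => false
  | f.+1 => if v == 0 then false else on_path_aux par f (par v) u
  end.
Definition on_tine (F : fork) (t u : nat) : bool := on_path_aux (fpar F) t t u.

Definition is_fork (w : seq bool) (F : fork) : Prop :=
  (forall v, 0 < v -> vertex F v -> fpar F v < v) /\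
  [/\
      (forall v, vertex F v -> flab F v <= size w),
      flab F 0 = 0,
      (forall v, 0 < v -> vertex F v -> flab F (fpar F v) < flab F v),
      (forall i, 1 <= i <= size w -> honest_idx w i ->
         count (fun v => flab F v == i) (iota 0 (fsize F).+1) = 1) &
      (forall u v, vertex F u -> vertex F v ->
         1 <= flab F u -> honest_idx w (flab F u) -> honest_idx w (flab F v) ->
         flab F u < flab F v -> depth F u < depth F v)].

Definition honest_vertex (w : seq bool) (F : fork) (v : nat) : bool :=
  (v == 0) || honest_idx w (flab F v).

Definition leaf (F : fork) (v : nat) : Prop :=
  vertex F v /\ forall u, 0 < u -> vertex F u -> fpar F u <> v.

Definition closed (w : seq bool) (F : fork) : Prop :=
  forall v, leaf F v -> honest_vertex w F v.

(* Tines are identified with their last vertex t; length(t) = depth t,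
   l(t) = flab F t. *)
Definition height (F : fork) : nat := \max_(v < (fsize F).+1) depth F v.

Definition gap (F : fork) (t : nat) : nat := height F - depth F t.

Definition reserve (w : seq bool) (F : fork) (t : nat) : nat :=
  count (fun i => adv w i && (flab F t < i)) (iota 1 (size w)).

Definition reach (w : seq bool) (F : fork) (t : nat) : int :=
  ((reserve w F t)%:Z - (gap F t)%:Z)%R.

Definition rho_fork (w : seq bool) (F : fork) : int :=
  maxZ (fun r => exists t, vertex F t /\ r = reach w F t).

Definition rho (w : seq bool) : int :=
  maxZ (fun r => exists F, [/\ is_fork w F, closed w F & r = rho_fork w F]).

(* tines t1 t2 are disjoint over y, where k = |x|: they share no edge
   terminating at a vertex with label > k (the edge terminating at u > 0 is
   (fpar u, u), and it lies on a tine iff u does). *)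
Definition disjoint_over (k : nat) (F : fork) (t1 t2 : nat) : Prop :=
  forall u, 0 < u -> vertex F u -> k < flab F u -> ~~ (on_tine F t1 u && on_tine F t2 u).

Definition mu_fork (x y : seq bool) (F : fork) : int :=
  maxZ (fun r => exists t1 t2, [/\ vertex F t1, vertex F t2,
          disjoint_over (size x) F t1 t2 &
          r = Order.min (reach (x ++ y) F t1) (reach (x ++ y) F t2)]).

Definition mu (x y : seq bool) : int :=
  maxZ (fun r => exists F, [/\ is_fork (x ++ y) F, closed (x ++ y) F & r = mu_fork x y F]).

From Pilot Require Import Defs.
From mathcomp Require Import all_boot all_order all_algebra.
From mathcomp Require Import zify.
From Stdlib Require Import ClassicalEpsilon Classical.
Import Order.TTheory GRing.Theory Num.Theory.
Set Implicit Arguments. Unset Strict Implicit. Unset Printing Implicit Defensive.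

(* Take an optimal closed fork F for xy0 together with an optimal pair of tines.
   The final honest index labels a single vertex h, a leaf deeper than every other
   honest vertex.  Deleting h and pruning adversarial leaves yields a closed fork G
   for xy of smaller height in which every other honest vertex of F survives with
   its depth and label.  Passing from a tine t <> h of F to its last honest vertex,
   read in G, loses no reserve beyond the depth it gives up, while the height drops
   by at least one; hence reach t < reach in G.  The tine h itself has reach <= 0,
   and the last honest vertex above it has reach >= 0 in G.  Comparing with
   mu_x(y) and rho(xy), both attained on G, gives the two bounds. *)

Lemma maxZ_spec (P : int -> Prop) (a B : int) :
  P a -> (forall k, P k -> (k <= B)%R) ->
  P (maxZ P) /\ forall k, P k -> (k <= maxZ P)%R.
Proof.
move=> Pa P_le_B.
suff has_max : exists m, P m /\ forall k, P k -> (k <= m)%R.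
  by rewrite /maxZ; exact: (epsilon_spec _ _ has_max).
suff: forall (n : nat) b, P b -> (B - b <= n%:Z)%R ->
    exists m, P m /\ forall k, P k -> (k <= m)%R.
  by move=> /(_ `|B - a|%N a Pa); apply; lia.
elim=> [|n IH] b Pb.
  by move=> le_B_b; exists b; split=> // k /P_le_B; lia.
move=> le_Bb_n; case: (classic (exists2 k, P k & (b < k)%R)) => [[k Pk lt_bk]|no_k].
  by apply: (IH k Pk); lia.
exists b; split=> // k Pk; case: (lerP k b) => // lt_bk.
by case: no_k; exists k.
Qed.

Definition parent_lt (F : fork) := forall v, 0 < v -> vertex F v -> fpar F v < v.

Lemma fork_parent_lt w F : is_fork w F -> parent_lt F.
Proof. by case. Qed.

Lemma vertex_parent F v : parent_lt F -> 0 < v -> vertex F v -> vertex F (fpar F v).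
Proof. by move=> Fpar v_gt0 Vv; apply: leq_trans (ltnW (Fpar v v_gt0 Vv)) Vv. Qed.

Lemma depth_aux_eq par1 par2 f g v :
  (forall u, 0 < u <= v -> par1 u = par2 u /\ par1 u < u) -> v <= f -> v <= g ->
  depth_aux par1 f v = depth_aux par2 g v.
Proof.
elim: f g v => [|f IH] [|g] v par_eq le_vf le_vg /=.
all: case: (posnP v) => [v0 | v_gt0]; [by rewrite ?v0 | try lia].
have [-> lt_par] := par_eq v (ltac:(lia)).
congr _.+1; apply: IH; try lia.
by move=> u u_le; apply: par_eq; lia.
Qed.

Lemma depth0 F : depth F 0 = 0.
Proof. by []. Qed.

Lemma depth_parent F v : parent_lt F -> 0 < v -> vertex F v ->
  depth F v = (depth F (fpar F v)).+1.
Proof.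
move=> Fpar; case: v => [//|v] _ Vv; rewrite /depth /=.
have lt_par := Fpar v.+1 isT Vv.
congr _.+1; apply: depth_aux_eq; [move=> u u_le | lia | lia].
split=> //; apply: Fpar; rewrite /vertex in Vv *; lia.
Qed.

Inductive ancestor (F : fork) : nat -> nat -> Prop :=
| ancestor_refl v : ancestor F v v
| ancestor_parent v u : 0 < v -> ancestor F (fpar F v) u -> ancestor F v u.

Lemma ancestor_trans F a b c : ancestor F a b -> ancestor F b c -> ancestor F a c.
Proof. by elim=> // v u v_gt0 _ IH /IH; apply: ancestor_parent. Qed.

Lemma ancestor_vertex F t u : parent_lt F -> ancestor F t u -> vertex F t -> vertex F u.
Proof. by move=> Fpar; elim=> // v u' v_gt0 _ IH Vv; apply/IH/vertex_parent. Qed.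

Lemma ancestor_leq F t u : parent_lt F -> ancestor F t u -> vertex F t -> u <= t.
Proof.
move=> Fpar; elim=> // v u' v_gt0 _ IH Vv.
exact: leq_trans (IH (vertex_parent Fpar v_gt0 Vv)) (ltnW (Fpar v v_gt0 Vv)).
Qed.

Lemma ancestor_leaf F t s : parent_lt F -> ancestor F t s -> vertex F t -> leaf F s -> t = s.
Proof.
move=> Fpar; elim=> // v u v_gt0 _ IH Vv leaf_u.
by case: (leaf_u.2 v v_gt0 Vv); apply: IH leaf_u; apply: vertex_parent.
Qed.

Lemma on_tineP F t u : parent_lt F -> vertex F t -> reflect (ancestor F t u) (on_tine F t u).
Proof.
move=> Fpar Vt; rewrite /on_tine; apply: (iffP idP).
  suff: forall f v, on_path_aux (fpar F) f v u -> ancestor F v u by apply.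
  elim=> [|f IH] v /=; first by rewrite orbF => /eqP ->; constructor.
  case/orP=> [/eqP ->|]; first by constructor.
  by case: (posnP v) => // v_gt0 /IH; apply: ancestor_parent.
suff: forall f v, vertex F v -> v <= f -> ancestor F v u -> on_path_aux (fpar F) f v u.
  by apply.
move=> f v Vv le_vf anc_vu; elim: anc_vu f Vv le_vf => [v' | v' u' v_gt0 _ IH] [|f] Vv le_vf /=.
- by rewrite eqxx.
- by rewrite eqxx.
- lia.
have -> : (v' == 0) = false by rewrite eqn0Ngt v_gt0.
apply/orP; right; apply: IH; first exact: vertex_parent.
by have := Fpar v' v_gt0 Vv; lia.
Qed.

Lemma depth_le_height F v : vertex F v -> depth F v <= height F.
Proof.
move=> Vv; have lt_v : v < (fsize F).+1 by [].
exact: (@leq_bigmax _ (fun i : 'I_(fsize F).+1 => depth F i) (Ordinal lt_v)).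
Qed.

Lemma leaf_of_height F z : parent_lt F -> vertex F z -> depth F z = height F -> leaf F z.
Proof.
move=> Fpar Vz depth_z; split=> // c c_gt0 Vc par_c.
by have := depth_le_height Vc; rewrite (depth_parent Fpar c_gt0 Vc) par_c depth_z ltnn.
Qed.

Lemma height_attained F : exists2 z, vertex F z & depth F z = height F.
Proof.
rewrite /height.
have [z ->] := @bigop.eq_bigmax _ (fun i : 'I_(fsize F).+1 => depth F i)
  (ltac:(by rewrite card_ord)).
by exists z; rewrite // /vertex -ltnS.
Qed.

Definition embedding (G F : fork) (e : nat -> nat) : Prop :=
  e 0 = 0 /\ forall i, vertex G i ->
    [/\ vertex F (e i), flab F (e i) = flab G i, 0 < i -> 0 < e i &
        0 < i -> fpar F (e i) = e (fpar G i)].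

Lemma embedding_comp G F H e1 e2 :
  embedding G F e1 -> embedding F H e2 -> embedding G H (e2 \o e1).
Proof.
move=> [e1_0 e1P] [e2_0 e2P]; split=> [|i Vi]; first by rewrite /= e1_0 e2_0.
have [V1 l1 pos1 par1] := e1P i Vi; have [V2 l2 pos2 par2] := e2P _ V1.
split=> //= [|i_gt0|i_gt0]; first by rewrite l2.
  exact/pos2/pos1.
by rewrite par2 ?par1 // pos1.
Qed.

Section Embedding.
Variables (G F : fork) (e : nat -> nat).
Hypotheses (Gpar : parent_lt G) (Fpar : parent_lt F) (Ge : embedding G F e).

Lemma embedding_depth i : vertex G i -> depth F (e i) = depth G i.
Proof.
elim/ltn_ind: i => i IH Vi; have [e0 /(_ i Vi) [Vei _ pos par]] := Ge.
case: (posnP i) => [-> | i_gt0]; first by rewrite e0.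
rewrite (depth_parent Fpar (pos i_gt0) Vei) (depth_parent Gpar i_gt0 Vi) par // IH //.
  exact: Gpar.
exact: vertex_parent.
Qed.

Lemma embedding_ancestor i j : vertex G i -> ancestor G i j -> ancestor F (e i) (e j).
Proof.
move=> Vi anc_ij; elim: anc_ij Vi => [v | v u v_gt0 _ IH] Vv; first by constructor.
have [_ /(_ v Vv) [_ _ pos par]] := Ge.
by apply: ancestor_parent; rewrite ?pos // par //; apply/IH/vertex_parent.
Qed.

Lemma embedding_disjoint_over k t1 t2 g1 g2 :
  flab F 0 = 0 -> vertex F t1 -> vertex F t2 -> vertex G g1 -> vertex G g2 ->
  ancestor F t1 (e g1) -> ancestor F t2 (e g2) -> disjoint_over k F t1 t2 ->
  disjoint_over k G g1 g2.
Proof.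
move=> lab0 Vt1 Vt2 Vg1 Vg2 anc1 anc2 disjF z z_gt0 Vz lt_kz.
apply/negP => /andP [/(on_tineP _ Gpar Vg1) anc_z1 /(on_tineP _ Gpar Vg2) anc_z2].
have [_ /(_ z Vz) [Vez lab_ez _ _]] := Ge.
have ez_gt0 : 0 < e z by case: (posnP (e z)) lt_kz => // ez0; rewrite -lab_ez ez0 lab0.
move/negP: (disjF (e z) ez_gt0 Vez (ltac:(by rewrite lab_ez))); apply.
apply/andP; split; apply/(on_tineP _ Fpar) => //.
  exact: ancestor_trans anc1 (embedding_ancestor Vg1 anc_z1).
exact: ancestor_trans anc2 (embedding_ancestor Vg2 anc_z2).
Qed.
End Embedding.

(* Meaningful only for a leaf s, since no parent pointer may be s. *)
Definition del_vertex (F : fork) (s : nat) : fork :=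
  Fork (fsize F).-1 (fun i => unbump s (fpar F (bump s i))) (fun i => flab F (bump s i)).

Lemma bump_gt0 s i : 0 < s -> (0 < bump s i) = (0 < i).
Proof. by move=> s_gt0; rewrite /bump; case: leqP; lia. Qed.

Lemma ltn_bump2 s i j : (bump s i < bump s j) = (i < j).
Proof. by rewrite !ltnNge leq_bump2. Qed.

Section DelLeaf.
Variables (F : fork) (s : nat).
Hypotheses (Fpar : parent_lt F) (s_gt0 : 0 < s) (leaf_s : leaf F s).

Lemma vertex_del i : vertex (del_vertex F s) i = vertex F (bump s i).
Proof. by case: leaf_s; rewrite /vertex /bump /=; case: leqP; lia. Qed.

Lemma fpar_del i : 0 < i -> vertex (del_vertex F s) i ->
  bump s (fpar (del_vertex F s) i) = fpar F (bump s i).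
Proof.
rewrite vertex_del => i_gt0 Vi; apply: unbumpK; apply/eqP/leaf_s.2 => //.
by rewrite bump_gt0.
Qed.

Lemma parent_lt_del : parent_lt (del_vertex F s).
Proof.
move=> i i_gt0 Vi; rewrite -(ltn_bump2 s) fpar_del //.
by apply: Fpar; rewrite ?bump_gt0 -?vertex_del.
Qed.

Lemma embedding_del : embedding (del_vertex F s) F (bump s).
Proof.
split=> [|i Vi]; first by rewrite /bump leqNgt s_gt0.
by split=> [||i_gt0|i_gt0]; rewrite -?vertex_del ?bump_gt0 ?fpar_del.
Qed.
End DelLeaf.

Lemma count_iota_bump (p : pred nat) s N : s <= N ->
  count p (iota 0 N.+1) = count (p \o bump s) (iota 0 N) + p s.
Proof.
move=> le_sN.
have -> : iota 0 N = iota 0 s ++ iota s (N - s) by rewrite -iotaD subnKC.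
have -> : iota 0 N.+1 = iota 0 s ++ s :: iota s.+1 (N - s).
  by rewrite -[N.+1](subnKC (leqW le_sN)) iotaD subSn.
rewrite !count_cat /=.
have -> : count (p \o bump s) (iota 0 s) = count p (iota 0 s).
  apply: eq_in_count => i; rewrite mem_iota add0n => /andP [_ lt_is].
  by rewrite /= /bump leqNgt lt_is.
have -> : count (p \o bump s) (iota s (N - s)) = count p (iota s.+1 (N - s)).
  rewrite -[s.+1]add1n iotaDl count_map.
  by apply: eq_in_count => i; rewrite mem_iota /= /bump => /andP [-> _].
lia.
Qed.

Lemma del_leaf_fork w' w F s :
  is_fork w' F -> 0 < s -> leaf F s -> adv w' =1 adv w -> size w <= size w' ->
  (forall v, vertex F v -> v <> s -> flab F v <= size w) ->
  (forall i, 1 <= i <= size w -> honest_idx w i -> flab F s <> i) ->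
  is_fork w (del_vertex F s).
Proof.
move=> HF; have Fpar := fork_parent_lt HF.
case: HF => _ [_ lab0 lab_par lab_honest honest_depth] s_gt0 leaf_s adv_eq le_w_w' lab_le lab_s.
have honest_eq i : honest_idx w i = honest_idx w' i by rewrite /honest_idx adv_eq.
have Ge := embedding_del s_gt0 leaf_s.
have Dpar := parent_lt_del Fpar s_gt0 leaf_s.
have Vdel := vertex_del s_gt0 leaf_s.
have Vs : s <= fsize F := leaf_s.1.
split=> //; split.
- by move=> v Vv; apply: lab_le; rewrite -?Vdel //; apply/eqP; rewrite eq_sym neq_bump.
- by rewrite /= /bump leqNgt s_gt0.
- move=> v v_gt0 Vv /=; rewrite (fpar_del s_gt0 leaf_s v_gt0 Vv).
  by apply: lab_par; rewrite ?bump_gt0 -?Vdel.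
- move=> i le_i honest_i.
  have -> : (fsize (del_vertex F s)).+1 = fsize F by rewrite /= prednK //; lia.
  have := lab_honest i (ltac:(lia)); rewrite -honest_eq => /(_ honest_i).
  by rewrite (count_iota_bump _ Vs) (introF eqP (lab_s i le_i honest_i)) addn0.
- move=> u v Vu Vv /=; rewrite -!(embedding_depth Dpar Fpar Ge) //.
  by rewrite !honest_eq; apply: honest_depth; rewrite -Vdel.
Qed.

Lemma del_leaf_cover w F s G e : 0 < s -> leaf F s ->
  (forall v, vertex (del_vertex F s) v -> honest_vertex w (del_vertex F s) v ->
     exists2 i, vertex G i & e i = v) ->
  forall v, vertex F v -> honest_vertex w F v -> v != s ->
  exists2 i, vertex G i & bump s (e i) = v.
Proof.
move=> s_gt0 leaf_s cover v Vv honest_v v_neq_s.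
have Vv' : vertex (del_vertex F s) (unbump s v) by rewrite (vertex_del s_gt0 leaf_s) unbumpK.
have honest_v' : honest_vertex w (del_vertex F s) (unbump s v).
  move: honest_v; rewrite /honest_vertex /= unbumpK //.
  by case/orP=> [/eqP -> // | ->]; rewrite orbT.
have [i Vi ei] := cover _ Vv' honest_v'.
by exists i; rewrite // ei unbumpK.
Qed.

Lemma closed_subfork w F : is_fork w F -> exists G e,
  [/\ is_fork w G, Defs.closed w G, embedding G F e &
      forall v, vertex F v -> honest_vertex w F v -> exists2 i, vertex G i & e i = v].
Proof.
move: {2}(fsize F).+1 (ltnSn (fsize F)) => N; elim: N F => // N IH F lt_FN HF.
have [closedF | ] := classic (Defs.closed w F).
  by exists F, id; split=> // v Vv _; exists v.
move=> /not_all_ex_not [s not_closed_s].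
have [leaf_s] := imply_to_and _ _ not_closed_s.
move=> /negP; rewrite /honest_vertex negb_or => /andP [s_neq0 adv_s].
have s_gt0 : 0 < s by rewrite lt0n.
have HD : is_fork w (del_vertex F s).
  apply: (del_leaf_fork HF) => // [v Vv _ | i _ honest_i lab_i].
    by case: HF => _ [lab_le _ _ _ _]; apply: lab_le.
  by move: adv_s; rewrite lab_i honest_i.
have lt_DN : fsize (del_vertex F s) < N by case: leaf_s; rewrite /vertex /=; lia.
have [G [e [HG closedG Ge cover]]] := IH _ lt_DN HD.
exists G, (bump s \o e); split=> //.
  exact: embedding_comp Ge (embedding_del s_gt0 leaf_s).
move=> v Vv honest_v; apply: (del_leaf_cover s_gt0 leaf_s cover Vv honest_v).
by apply: contraTneq honest_v => ->; rewrite /honest_vertex negb_or s_neq0.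
Qed.

Definition add_leaf (F : fork) (p l : nat) : fork :=
  Fork (fsize F).+1 (fun v => if v == (fsize F).+1 then p else fpar F v)
                    (fun v => if v == (fsize F).+1 then l else flab F v).

Lemma vertex_neq_new F v : vertex F v -> (v == (fsize F).+1) = false.
Proof. by rewrite /vertex => Vv; apply/eqP; lia. Qed.

Lemma vertex_add_leaf F p l v :
  vertex (add_leaf F p l) v = (v == (fsize F).+1) || vertex F v.
Proof. by rewrite /vertex /=; apply/idP/idP; lia. Qed.

Lemma flab_add_leaf F p l v :
  flab (add_leaf F p l) v = if v == (fsize F).+1 then l else flab F v.
Proof. by []. Qed.

Section AddLeaf.
Variables (F : fork) (p l : nat).
Hypotheses (Fpar : parent_lt F) (Vp : vertex F p).

Lemma fpar_add_leaf_new : fpar (add_leaf F p l) (fsize F).+1 = p.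
Proof. by rewrite [fpar _ _]/= eqxx. Qed.

Lemma parent_lt_add_leaf : parent_lt (add_leaf F p l).
Proof.
move=> v v_gt0; rewrite /vertex /=; case: eqP => [-> | /eqP v_neq] Vv.
  by move: Vp; rewrite /vertex.
by apply: Fpar; rewrite /vertex; lia.
Qed.

Lemma embedding_add_leaf : embedding F (add_leaf F p l) id.
Proof.
by split=> // v Vv; rewrite /= !vertex_neq_new //; split=> //; apply: leqW.
Qed.

Lemma depth_add_leaf_old v : vertex F v -> depth (add_leaf F p l) v = depth F v.
Proof. exact: (embedding_depth Fpar parent_lt_add_leaf embedding_add_leaf). Qed.

Lemma depth_add_leaf_new : depth (add_leaf F p l) (fsize F).+1 = (depth F p).+1.
Proof.
by rewrite (depth_parent parent_lt_add_leaf) ?fpar_add_leaf_new ?depth_add_leaf_old // /vertex.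
Qed.
End AddLeaf.

Lemma honest_idx_labelled w F i : is_fork w F -> 0 < i <= size w -> honest_idx w i ->
  exists2 v, vertex F v & flab F v = i.
Proof.
case=> _ [_ _ _ lab_honest _] le_i honest_i.
have : has (fun v => flab F v == i) (iota 0 (fsize F).+1).
  by rewrite has_count lab_honest.
by case/hasP=> v; rewrite mem_iota => /andP [_ lt_v] /eqP; exists v.
Qed.

Lemma honest_label_inj w F u v : is_fork w F -> vertex F u -> vertex F v ->
  flab F u = flab F v -> 0 < flab F u <= size w -> honest_idx w (flab F u) -> u = v.
Proof.
move=> HF Vu Vv lab_uv le_u honest_u; case: HF => _ [_ _ _ lab_honest _].
apply/eqP; apply: contraT => u_neq_v.
have : size [:: u; v] <= count (fun x => flab F x == flab F u) (iota 0 (fsize F).+1).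
  rewrite -size_filter; apply: uniq_leq_size => [|x]; first by rewrite /= inE andbT.
  rewrite !inE mem_filter mem_iota => /orP [] /eqP ->; rewrite -?lab_uv eqxx /= add0n ltnS //.
by rewrite lab_honest.
Qed.

Lemma flab_gt0 w F v : is_fork w F -> 0 < v -> vertex F v -> 0 < flab F v.
Proof. by case=> _ [_ lab0 lab_par _ _] v_gt0 /(lab_par v v_gt0); rewrite -ltnS; lia. Qed.

Lemma adv_rcons_false w : adv (rcons w false) =1 adv w.
Proof.
move=> i; rewrite /adv nth_rcons.
by case: ltngtP => // [/ltnW | /esym/eq_leq] le_w_i; rewrite nth_default.
Qed.

Lemma honest_idx_rcons_false w : honest_idx (rcons w false) =1 honest_idx w.
Proof. by move=> i; rewrite /honest_idx adv_rcons_false. Qed.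

Lemma honest_vertex_rcons_false w F : honest_vertex (rcons w false) F =1 honest_vertex w F.
Proof. by move=> v; rewrite /honest_vertex honest_idx_rcons_false. Qed.

Lemma honest_idx_rcons w b i : 0 < i <= size w -> honest_idx (rcons w b) i = honest_idx w i.
Proof. by move=> le_i; rewrite /honest_idx /adv nth_rcons; case: ltnP => //; lia. Qed.

Lemma honest_idx_rcons_last w b : honest_idx (rcons w b) (size w).+1 = ~~ b.
Proof. by rewrite /honest_idx /adv nth_rcons ltnn eqxx. Qed.

Lemma closed_fork_rcons_true w F : is_fork w F -> Defs.closed w F ->
  is_fork (rcons w true) F /\ Defs.closed (rcons w true) F.
Proof.
move=> HF closedF; have Fpar := fork_parent_lt HF.
case: (HF) => _ [lab_le lab0 lab_par lab_honest honest_depth].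
have honest_lab v : 0 < v -> vertex F v ->
    honest_idx (rcons w true) (flab F v) = honest_idx w (flab F v).
  by move=> v_gt0 Vv; rewrite honest_idx_rcons // (flab_gt0 HF) ?lab_le.
split; last first.
  move=> v leaf_v; move: (closedF v leaf_v); rewrite /honest_vertex.
  by case: (posnP v) => [-> // | v_gt0]; rewrite honest_lab //; case: leaf_v.
split=> //; split=> // [v Vv | i | u v Vu Vv lab_u_gt0 honest_u honest_v lt_uv].
- by rewrite size_rcons leqW ?lab_le.
- rewrite size_rcons => /andP [i_gt0 le_i]; case: (ltnP i (size w).+1) => [lt_i | ge_i].
    by rewrite honest_idx_rcons ?i_gt0 // => honest_i; apply: lab_honest; rewrite ?i_gt0.
  have -> : i = (size w).+1 by lia.
  by rewrite honest_idx_rcons_last.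
- have [u0 | u_gt0] := posnP u; first by move: lab_u_gt0; rewrite u0 lab0.
  have v_gt0 : 0 < v by case: (posnP v) lt_uv => // ->; rewrite lab0.
  by apply: honest_depth; rewrite -?honest_lab.
Qed.

Lemma add_leaf_closed w F z : Defs.closed w F ->
  Defs.closed (rcons w false) (add_leaf F z (size w).+1).
Proof.
move=> closedF v [Vv no_child]; rewrite /honest_vertex flab_add_leaf.
case: (v =P (fsize F).+1) => [_ | /eqP v_neq]; first by rewrite honest_idx_rcons_last orbT.
rewrite honest_idx_rcons_false; apply: closedF; split=> [|u u_gt0 Vu].
  by move: Vv; rewrite vertex_add_leaf (negbTE v_neq).
by move: (no_child u u_gt0 (leqW Vu)); rewrite /= vertex_neq_new.
Qed.

Lemma add_leaf_fork w F z : is_fork w F -> vertex F z -> depth F z = height F ->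
  is_fork (rcons w false) (add_leaf F z (size w).+1).
Proof.
move=> HF Vz depth_z; have Fpar := fork_parent_lt HF.
case: (HF) => _ [lab_le lab0 lab_par lab_honest honest_depth].
have honestE := honest_idx_rcons_false w; have old := @vertex_neq_new F.
split; first exact: parent_lt_add_leaf.
split.
- move=> v; rewrite vertex_add_leaf flab_add_leaf size_rcons.
  by case: eqP => [_ _ | _ Vv] //; apply/leqW/lab_le.
- by rewrite flab_add_leaf.
- move=> v v_gt0; rewrite vertex_add_leaf !flab_add_leaf.
  case: (v =P (fsize F).+1) => [-> _ | /eqP v_neq Vv].
    by rewrite fpar_add_leaf_new old // ltnS lab_le.
  by rewrite [fpar _ v]/= (negbTE v_neq) old ?lab_par //; apply: vertex_parent.
- move=> i; rewrite size_rcons => /andP [i_gt0 le_i] honest_i.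
  have -> : (fsize (add_leaf F z (size w).+1)).+1 = (fsize F).+1 + 1 by rewrite addn1.
  rewrite iotaD count_cat add0n (_ : iota _ 1 = [:: (fsize F).+1]) //.
  rewrite [count _ [:: _]]/= eqxx addn0.
  rewrite (@eq_in_count _ _ (fun v => flab F v == i)); last first.
    by move=> v; rewrite mem_iota flab_add_leaf => /andP [_ lt_v]; rewrite old.
  case: (ltnP i (size w).+1) => [lt_i | ge_i].
    by rewrite lab_honest ?i_gt0 -?honestE // (introF eqP (_ : (size w).+1 <> i)) //; lia.
  have -> : i = (size w).+1 by lia.
  rewrite eqxx (@eq_in_count _ _ pred0) ?count_pred0 // => v.
  by rewrite mem_iota => /andP [_ lt_v]; apply/negbTE; rewrite neq_ltn ltnS lab_le.
- move=> u v; rewrite !vertex_add_leaf !flab_add_leaf.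
  case: (u =P (fsize F).+1) => [-> _ | /eqP u_neq Vu];
    case: (v =P (fsize F).+1) => [-> _ | /eqP v_neq Vv].
  + by rewrite ltnn.
  + by move=> _ _ _; rewrite ltnNge leqW ?lab_le.
  + rewrite depth_add_leaf_new // depth_add_leaf_old // depth_z ltnS => *.
    exact: depth_le_height.
  + by rewrite !honestE !depth_add_leaf_old //; apply: honest_depth.
Qed.

Lemma closed_fork_exists w : exists F, is_fork w F /\ Defs.closed w F.
Proof.
elim/last_ind: w => [|w [] [F [HF closedF]]].
- exists (Fork 0 (fun _ => 0) (fun _ => 0)); rewrite /vertex /=.
  split; last by move=> v [Vv _]; move: Vv; rewrite /vertex leqn0 => /eqP ->.
  split=> [v|]; rewrite /vertex /=; first lia.
  by split; rewrite /vertex /= => *; lia.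
- by exists F; apply: closed_fork_rcons_true.
- have [z Vz depth_z] := height_attained F.
  by exists (add_leaf F z (size w).+1); split; [apply: add_leaf_fork | apply: add_leaf_closed].
Qed.

Definition adv_after (w : seq bool) (l : nat) : nat :=
  count (fun i => adv w i && (l < i)) (iota 1 (size w)).

Lemma reserveE w F t : reserve w F t = adv_after w (flab F t).
Proof. by []. Qed.

Lemma adv_after_rcons_false w l : adv_after (rcons w false) l = adv_after w l.
Proof.
rewrite /adv_after size_rcons -[(size w).+1]addn1 iotaD count_cat add1n /=.
rewrite adv_rcons_false [adv w _]/adv nth_default // addn0 andFb addn0.
by apply: eq_in_count => i _; rewrite adv_rcons_false.
Qed.

Lemma adv_after_size w l : size w <= l -> adv_after w l = 0.
Proof.
move=> le_wl; rewrite /adv_after (@eq_in_count _ _ pred0) ?count_pred0 // => i.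
rewrite mem_iota add1n ltnS => /andP [_ le_i] /=.
by rewrite ltnNge (leq_trans le_i le_wl) andbF.
Qed.

Lemma adv_after_ltn w l l' :
  l < l' -> l' <= size w -> adv w l' -> (adv_after w l').+1 <= adv_after w l.
Proof.
move=> lt_ll' le_l'w adv_l'; rewrite /adv_after.
set P := fun k i => adv w i && (k < i); set s := iota 1 (size w).
change (count (P l') s < count (P l) s).
have l'_s : l' \in s by rewrite mem_iota; lia.
have P_l_l' : P l l' by rewrite /P adv_l' lt_ll'.
have : 0 < count (P l) s by rewrite -has_count; apply/hasP; exists l'.
have rem_l : count (P l) (rem l' s) = count (P l) s - 1 by rewrite count_rem l'_s P_l_l'.
have rem_l' : count (P l') (rem l' s) = count (P l') s.
  by rewrite count_rem l'_s /P ltnn andbF subn0.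
have P_sub : subpred (P l') (P l) by move=> i; rewrite /P => /andP [-> /(ltn_trans lt_ll') ->].
have := sub_count P_sub (rem l' s); lia.
Qed.

(* Every vertex strictly between u and t is adversarial, and its label counts
   towards the reserve of u but not towards that of t. *)
Lemma honest_ancestor_reserve w F t : is_fork w F -> vertex F t -> exists u,
  [/\ ancestor F t u, honest_vertex w F u, depth F u <= depth F t &
      adv_after w (flab F t) + (depth F t - depth F u) <= adv_after w (flab F u)].
Proof.
move=> HF; have Fpar := fork_parent_lt HF; case: (HF) => _ [lab_le _ lab_par _ _].
elim/ltn_ind: t => t IH Vt.
have [honest_t | ] := boolP (honest_vertex w F t).
  by exists t; split=> //; [constructor | rewrite subnn addn0].
rewrite /honest_vertex negb_or -lt0n => /andP [t_gt0 /negbNE adv_t].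
have Vp := vertex_parent Fpar t_gt0 Vt.
have [u [anc_u honest_u le_u le_adv]] := IH _ (Fpar t t_gt0 Vt) Vp.
have lt_adv := adv_after_ltn (lab_par t t_gt0 Vt) (lab_le t Vt) adv_t.
exists u; rewrite (depth_parent Fpar t_gt0 Vt); split=> //; first exact: ancestor_parent.
  exact: leqW.
lia.
Qed.

Lemma reach_le_size w F t : (reach w F t <= (size w)%:Z)%R.
Proof.
have := count_size (fun i => adv w i && (flab F t < i)) (iota 1 (size w)).
by rewrite /reach /reserve size_iota; lia.
Qed.

Lemma reach_le0 w F t : size w <= flab F t -> (reach w F t <= 0)%R.
Proof. by move=> le_wt; rewrite /reach reserveE adv_after_size //; lia. Qed.

Lemma rho_fork_spec w F :
  (exists2 t, vertex F t & rho_fork w F = reach w F t) /\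
  (forall t, vertex F t -> (reach w F t <= rho_fork w F)%R).
Proof.
rewrite /rho_fork; set P := fun r => exists t, vertex F t /\ r = reach w F t.
have P_le r : P r -> (r <= (size w)%:Z)%R by case=> t [_ ->]; apply: reach_le_size.
have P0 : P (reach w F 0) by exists 0.
have [[t [Vt ->]] rho_ge] := maxZ_spec P0 P_le.
by split=> [|t' Vt']; [exists t | apply: rho_ge; exists t'].
Qed.

Lemma rho_fork_le_rho w F : is_fork w F -> Defs.closed w F -> (rho_fork w F <= rho w)%R.
Proof.
move=> HF closedF; rewrite /rho.
set P := fun r => exists G, [/\ is_fork w G, Defs.closed w G & r = rho_fork w G].
have P_le r : P r -> (r <= (size w)%:Z)%R.
  by case=> G [_ _ ->]; have [[t _ ->] _] := rho_fork_spec w G; apply: reach_le_size.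
have PF : P (rho_fork w F) by exists F.
by apply: (maxZ_spec PF P_le).2.
Qed.

Lemma disjoint_over00 k F : disjoint_over k F 0 0.
Proof. by case. Qed.

Lemma disjoint_overC k F t1 t2 : disjoint_over k F t1 t2 -> disjoint_over k F t2 t1.
Proof. by move=> disj u u_gt0 Vu lt_ku; rewrite andbC disj. Qed.

Lemma mu_fork_spec x y F :
  (exists t1 t2, [/\ vertex F t1, vertex F t2, disjoint_over (size x) F t1 t2 &
    mu_fork x y F = Order.min (reach (x ++ y) F t1) (reach (x ++ y) F t2)]) /\
  (forall t1 t2, vertex F t1 -> vertex F t2 -> disjoint_over (size x) F t1 t2 ->
    (Order.min (reach (x ++ y) F t1) (reach (x ++ y) F t2) <= mu_fork x y F)%R).
Proof.
rewrite /mu_fork; set P := fun r => exists t1 t2, _.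
have P_le r : P r -> (r <= (size (x ++ y))%:Z)%R.
  by case=> t1 [t2 [_ _ _ ->]]; rewrite ge_min reach_le_size.
have P0 : P (Order.min (reach (x ++ y) F 0) (reach (x ++ y) F 0)).
  by exists 0, 0; split=> //; apply: disjoint_over00.
have [PM mu_ge] := maxZ_spec P0 P_le.
by split=> // t1 t2 Vt1 Vt2 disj; apply: mu_ge; exists t1, t2.
Qed.

Lemma mu_spec x y :
  (exists F, [/\ is_fork (x ++ y) F, Defs.closed (x ++ y) F & mu x y = mu_fork x y F]) /\
  (forall F, is_fork (x ++ y) F -> Defs.closed (x ++ y) F -> (mu_fork x y F <= mu x y)%R).
Proof.
rewrite /mu; set P := fun r => exists F, _.
have P_le r : P r -> (r <= (size (x ++ y))%:Z)%R.
  case=> F [_ _ ->]; have [[t1 [t2 [_ _ _ ->]]] _] := mu_fork_spec x y F.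
  by rewrite ge_min reach_le_size.
have [F [HF closedF]] := closed_fork_exists (x ++ y).
have PF : P (mu_fork x y F) by exists F.
have [PM mu_ge] := maxZ_spec PF P_le.
by split=> // G HG closedG; apply: mu_ge; exists G.
Qed.

Section DropLastHonest.
Variables (w : seq bool) (F : fork) (h : nat).
Hypotheses (HF : is_fork (rcons w false) F) (Vh : vertex F h)
  (lab_h : flab F h = (size w).+1).

Let Fpar := fork_parent_lt HF.

Lemma last_gt0 : 0 < h.
Proof. by case: (posnP h) lab_h => // ->; case: HF => _ [_ -> _ _ _]. Qed.

Lemma leaf_last : leaf F h.
Proof.
split=> // u u_gt0 Vu par_u; case: HF => _ [lab_le _ lab_par _ _].
by have := lab_par u u_gt0 Vu; rewrite par_u lab_h ltnNge -(size_rcons w false) lab_le.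
Qed.

Lemma flab_le_size v : vertex F v -> v <> h -> flab F v <= size w.
Proof.
move=> Vv v_neq_h; case: (HF) => _ [lab_le _ _ _ _].
have := lab_le v Vv; rewrite size_rcons leq_eqVlt => /orP [/eqP lab_v | //].
case: v_neq_h; apply: (honest_label_inj HF Vv Vh); rewrite lab_v ?lab_h //.
  by rewrite size_rcons ltn0Sn leqnn.
by rewrite honest_idx_rcons_last.
Qed.

Lemma fork_del_last : is_fork w (del_vertex F h).
Proof.
apply: (del_leaf_fork HF last_gt0 leaf_last (@adv_rcons_false w)) => [|v Vv|i le_i _].
- by rewrite size_rcons.
- exact: flab_le_size.
- by rewrite lab_h; lia.
Qed.

Lemma closed_subfork_del_last : exists G e,
  [/\ is_fork w G, Defs.closed w G, embedding G F e &
      forall v, vertex F v -> honest_vertex w F v -> v <> h -> exists2 g, vertex G g & e g = v].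
Proof.
have [G [e [HG closedG Ge cover]]] := closed_subfork fork_del_last.
exists G, (bump h \o e); split=> //.
  exact: embedding_comp Ge (embedding_del last_gt0 leaf_last).
by move=> v Vv honest_v /eqP; apply: (del_leaf_cover last_gt0 leaf_last cover).
Qed.

Variables (G : fork) (e : nat -> nat).
Hypotheses (HG : is_fork w G) (closedG : Defs.closed w G) (Ge : embedding G F e)
  (cover : forall v, vertex F v -> honest_vertex w F v -> v <> h ->
             exists2 g, vertex G g & e g = v).

Let Gpar := fork_parent_lt HG.

Lemma height_lt_last : height G < depth F h.
Proof.
have [z Vz depth_z] := height_attained G.
have depth_h : 0 < depth F h by rewrite (depth_parent Fpar last_gt0 Vh).
have [z0 | z_gt0] := posnP z; first by rewrite -depth_z z0 depth0.
have [_ /(_ z Vz) [Vez lab_ez _ _]] := Ge.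
have := closedG (leaf_of_height Gpar Vz depth_z); rewrite /honest_vertex eqn0Ngt z_gt0 /=.
case: (HF) => _ [_ _ _ _ honest_depth]; case: (HG) => _ [lab_le _ _ _ _] honest_z.
rewrite -depth_z -(embedding_depth Gpar Fpar Ge Vz); apply: honest_depth => //.
- by rewrite lab_ez (flab_gt0 HG).
- by rewrite lab_ez honest_idx_rcons_false.
- by rewrite lab_h honest_idx_rcons_last.
- by rewrite lab_ez lab_h ltnS lab_le.
Qed.

Lemma reach_lt_subfork t : vertex F t -> t <> h ->
  exists2 g, vertex G g & ancestor F t (e g) /\ (reach (rcons w false) F t < reach w G g)%R.
Proof.
move=> Vt t_neq_h.
have [u [anc_u honest_u le_u le_adv]] := honest_ancestor_reserve HF Vt.
have u_neq_h : u <> h.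
  by move=> u_h; apply: t_neq_h; rewrite u_h in anc_u; apply: ancestor_leaf leaf_last.
have Vu := ancestor_vertex Fpar anc_u Vt.
have [g Vg eg] := cover Vu (ltac:(by rewrite -honest_vertex_rcons_false)) u_neq_h.
have [_ /(_ g Vg) [_ lab_eg _ _]] := Ge.
exists g => //; split; first by rewrite eg.
have := depth_le_height Vt; have := depth_le_height Vh; have := depth_le_height Vg.
have := height_lt_last.
have := embedding_depth Gpar Fpar Ge Vg.
rewrite !adv_after_rcons_false in le_adv.
by rewrite /reach /gap !reserveE -lab_eg eg adv_after_rcons_false; lia.
Qed.

Lemma reach_above_last : exists2 g, vertex G g & ancestor F h (e g) /\ (0 <= reach w G g)%R.
Proof.
have Vp := vertex_parent Fpar last_gt0 Vh.
have [u [anc_u honest_u le_u le_adv]] := honest_ancestor_reserve HF Vp.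
have Vu := ancestor_vertex Fpar anc_u Vp.
have u_neq_h : u <> h.
  by have := ancestor_leq Fpar anc_u Vp; have := Fpar last_gt0 Vh; lia.
have [g Vg eg] := cover Vu (ltac:(by rewrite -honest_vertex_rcons_false)) u_neq_h.
have [_ /(_ g Vg) [_ lab_eg _ _]] := Ge.
exists g => //; split; first by rewrite eg; apply: ancestor_parent last_gt0 _.
have := height_lt_last; rewrite (depth_parent Fpar last_gt0 Vh).
have := embedding_depth Gpar Fpar Ge Vg.
rewrite !adv_after_rcons_false in le_adv.
by rewrite /reach /gap reserveE -lab_eg eg; lia.
Qed.
End DropLastHonest.

Lemma disjoint_tines_rcons_false w k F t1 t2 :
  k <= size w -> is_fork (rcons w false) F ->
  vertex F t1 -> vertex F t2 -> disjoint_over k F t1 t2 ->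
  exists G g1 g2,
    [/\ is_fork w G, Defs.closed w G, vertex G g1, vertex G g2 & disjoint_over k G g1 g2] /\
    let m := Order.min (reach (rcons w false) F t1) (reach (rcons w false) F t2) in
    (m < Order.min (reach w G g1) (reach w G g2))%R \/
    [/\ m <= 0, 0 <= reach w G g1 & m < reach w G g2]%R.
Proof.
move=> le_kw HF Vt1 Vt2 disj.
have Fpar := fork_parent_lt HF.
case: (HF) => _ [_ lab0 _ _ _].
have [h Vh lab_h] := honest_idx_labelled (i := (size w).+1) HF
  (ltac:(by rewrite size_rcons ltn0Sn leqnn)) (honest_idx_rcons_last w false).
have [G [e [HG closedG Ge cover]]] := closed_subfork_del_last HF Vh lab_h.
have Gpar := fork_parent_lt HG.
have disjG g1 g2 : vertex G g1 -> vertex G g2 ->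
    ancestor F t1 (e g1) -> ancestor F t2 (e g2) -> disjoint_over k G g1 g2.
  by move=> Vg1 Vg2 anc1 anc2; apply: (embedding_disjoint_over Gpar Fpar Ge lab0 Vt1 Vt2).
have reach_lt := reach_lt_subfork HF Vh lab_h HG closedG Ge cover.
have [gh Vgh [anc_h reach_gh]] := reach_above_last HF Vh lab_h HG closedG Ge cover.
have reach_h : (reach (rcons w false) F h <= 0)%R by rewrite reach_le0 // lab_h size_rcons.
case: (t1 =P h) => [t1_h | t1_neq_h]; case: (t2 =P h) => [t2_h | t2_neq_h].
- have h_gt0 := last_gt0 HF lab_h.
  have := disj h h_gt0 Vh (ltac:(by rewrite lab_h ltnS)).
  by rewrite t1_h t2_h (introT (on_tineP _ Fpar Vh) (ancestor_refl F h)).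
- have [g2 Vg2 [anc2 lt2]] := reach_lt _ Vt2 t2_neq_h.
  exists G, gh, g2; split; first by split=> //; apply: disjG => //; rewrite t1_h.
  by cbv zeta; rewrite t1_h; right; split; lia.
- have [g1 Vg1 [anc1 lt1]] := reach_lt _ Vt1 t1_neq_h.
  exists G, gh, g1; split; first by split=> //; apply/disjoint_overC/disjG => //; rewrite t2_h.
  by cbv zeta; rewrite t2_h; right; split; lia.
- have [g1 Vg1 [anc1 lt1]] := reach_lt _ Vt1 t1_neq_h.
  have [g2 Vg2 [anc2 lt2]] := reach_lt _ Vt2 t2_neq_h.
  exists G, g1, g2; split; first by split=> //; apply: disjG.
  by cbv zeta; left; lia.
Qed.

Theorem proposition2 (x y : seq bool) :
  0 < size y ->
  (((mu x y < rho (x ++ y))%R /\ mu x y = 0%R) -> (mu x (rcons y false) <= 0)%R) /\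
  (~ ((mu x y < rho (x ++ y))%R /\ mu x y = 0%R) -> (mu x (rcons y false) <= mu x y - 1)%R).
Proof.
(* The bounds hold for every y. *)
move=> _.
have [[F [HF _ ->]] _] := mu_spec x (rcons y false).
have [[t1 [t2 [Vt1 Vt2 disj ->]]] _] := mu_fork_spec x (rcons y false) F.
rewrite -rcons_cat in HF *.
have le_xw : size x <= size (x ++ y) by rewrite size_cat leq_addr.
have [G [g1 [g2 [[HG closedG Vg1 Vg2 disjG] bounds]]]] :=
  disjoint_tines_rcons_false le_xw HF Vt1 Vt2 disj.
have mu_ge : (Order.min (reach (x ++ y) G g1) (reach (x ++ y) G g2) <= mu x y)%R.
  exact: le_trans ((mu_fork_spec x y G).2 g1 g2 Vg1 Vg2 disjG) ((mu_spec x y).2 G HG closedG).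
have rho_ge : (reach (x ++ y) G g2 <= rho (x ++ y))%R.
  exact: le_trans ((rho_fork_spec _ G).2 g2 Vg2) (rho_fork_le_rho HG closedG).
move: bounds; cbv zeta => -[lt_min | [le0 ge0 lt_g2]]; split; lia.
Qed.
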